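(* Let $S_7\subseteq G^7$ be the stabilizer group generated by $g_1=IIIXXXX$, $g_2=IXXIIXX$, $g_3=XIXIXIX$, $g_4=IIIZZZZ$, $g_5=IZZIIZZ$, $g_6=ZIZIZIZ$ (tensor signs omitted, $j$-th letter acting on qubit $j$). Define $\phi:\mathbb{F}_2^6\to G^7$ by $\phi(\epsilon_1,\dots,\epsilon_6)=Z_a X_b$, where $a=4\epsilon_1+2\epsilon_2+\epsilon_3$, $b=4\epsilon_4+2\epsilon_5+\epsilon_6$, $Z_a$ (resp. $X_b$) denotes $Z$ (resp. $X$) on qubit $a$ (resp. $b$) and identity elsewhere, and $Z_0=X_0=I^{\otimes 7}$. Then $f_{S_7}(0)=f_{S_7}(1)=1$, $f_{S_7}(2)=\tfrac{9}{16}$, $f_{S_7}(3)=\tfrac{5}{16}$, $f_{S_7}(4)=\tfrac{5}{64}$, and $f_{S_7}(5)=f_{S_7}(6)=f_{S_7}(7)=0$.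
   Context: $X=\begin{pmatrix}0&1\\1&0\end{pmatrix}$, $Y=\begin{pmatrix}0&1\\-1&0\end{pmatrix}$, $Z=\begin{pmatrix}1&0\\0&-1\end{pmatrix}$. For a stabilizer group $S\subseteq G^n$ (abelian subgroup of the $n$-qubit Pauli group not containing $-I$) with independent generators $g_1,\dots,g_r$, the syndrome of a Pauli operator $g$ is $\epsilon(g)\in\mathbb{F}_2^r$, $\epsilon_i(g)=0$ if $g$ commutes with $g_i$ and $1$ if it anticommutes. For $\{m\}\subseteq\{1,\dots,n\}$, $P^{\{m\}}$ is the set of tensor products that are one of $I,X,Y,Z$ on each qubit of $\{m\}$ and $I$ elsewhere. Given an error correcting function $\phi:\mathbb{F}_2^r\to G^n$, call a syndrome $\epsilon\in\Sigma_{\{m\}}:=\{\epsilon(g):g\in P^{\{m\}}\}$ good for $\{m\}$ if $\phi(\epsilon)g\in\{\lambda s:s\in S,\lambda\in\{\pm1,\pm i\}\}$ for every $g\in P^{\{m\}}$ with $\epsilon(g)=\epsilon$. Define, for $t=0,\dots,n$, $$f_S(t)=\binom{n}{t}^{-1}\sum_{|\{m\}|=t}\frac{|\{\epsilon\in\Sigma_{\{m\}}:\epsilon\text{ good for }\{m\}\}|}{|\Sigma_{\{m\}}|},$$ the sum over all $t$-element subsets $\{m\}$; this is the probability that a random error affecting $t$ randomly located qubits is corrected. *)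

From HB Require Import structures.
From mathcomp Require Import all_boot all_order all_algebra.
Set Implicit Arguments. Unset Strict Implicit. Unset Printing Implicit Defensive.
Import Order.TTheory GRing.Theory Num.Theory.
Local Open Scope ring_scope.

(* Single-qubit Pauli letters I, X, Y, Z with the paper's convention
   Y = [[0,1],[-1,0]]. *)
Inductive letter := PI | PX | PY | PZ.

Definition letter_code (a : letter) : 'I_4 :=
  match a with PI => inord 0 | PX => inord 1 | PY => inord 2 | PZ => inord 3 end.
Definition letter_decode (k : 'I_4) : letter :=
  match val k with 0 => PI | 1 => PX | 2 => PY | _ => PZ end.
Lemma letter_codeK : cancel letter_code letter_decode.
Proof. by case; rewrite /letter_decode /= inordK. Qed.
HB.instance Definition _ := Finite.copy letter (can_type letter_codeK).

Definition letter_mx (a : letter) : 'M[int]_2 :=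
  match a with
  | PI => \matrix_(i, j) (if i == j then 1 else 0)
  | PX => \matrix_(i, j) (if i == j then 0 else 1)
  | PY => \matrix_(i, j) (if i == j then 0 else if i == 0 then 1 else -1)
  | PZ => \matrix_(i, j) (if i == j then (if i == 0 then 1 else -1) else 0)
  end.

(* Product of two letters: (c, k) means  a * b = i^k * c  (as matrices). *)
Definition mul1 (a b : letter) : letter * 'Z_4 :=
  match a, b with
  | PI, c | c, PI => (c, 0%R)
  | PX, PX | PZ, PZ => (PI, 0%R)
  | PY, PY => (PI, 2%:R)
  | PX, PZ => (PY, 2%:R) | PZ, PX => (PY, 0%R)
  | PX, PY => (PZ, 2%:R) | PY, PX => (PZ, 0%R)
  | PY, PZ => (PX, 2%:R) | PZ, PY => (PX, 0%R)
  end.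

(* Sanity check of the multiplication table against the matrices
   (all phases of single-qubit products are real, i.e. k is 0 or 2). *)
Lemma mul1_correct (a b : letter) :
  letter_mx a *m letter_mx b =
  (if val (mul1 a b).2 == 2%N then -1 else 1) *: letter_mx (mul1 a b).1.
Proof.
by case: a; case: b; apply/matrixP => i j;
  rewrite !mxE !big_ord_recr big_ord0 /= !mxE;
  case: i => [[|[|//]] ?]; case: j => [[|[|//]] ?].
Qed.

(* The n-qubit Pauli group G^n: an element (k, f) stands for the operator
   i^k * (f 0 (x) f 1 (x) ... (x) f (n-1)).  Qubit j (1-indexed in the paper)
   is the ordinal j-1. *)
Definition pauli (n : nat) := ('Z_4 * {ffun 'I_n -> letter})%type.

Definition pphase n (g : pauli n) : 'Z_4 := g.1.
Definition plet n (g : pauli n) : {ffun 'I_n -> letter} := g.2.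

Definition pid n : pauli n := (0%R, [ffun _ => PI]).

Definition pmul n (g h : pauli n) : pauli n :=
  ((pphase g + pphase h + \sum_(j < n) (mul1 (plet g j) (plet h j)).2)%R,
   [ffun j => (mul1 (plet g j) (plet h j)).1]).

Definition pscale n (k : 'Z_4) (g : pauli n) : pauli n := ((k + pphase g)%R, plet g).

Definition pcommute n (g h : pauli n) : bool := pmul g h == pmul h g.

(* The subgroup generated by gens: the smallest subset of G^n containing the
   identity and the generators and closed under multiplication (in a finite
   group this is the generated subgroup). *)
Definition gen_group n r (gens : 'I_r -> pauli n) : {set pauli n} :=
  \bigcap_(A : {set pauli n} |
      [&& pid n \in A, [forall i, gens i \in A] &
          [forall g in A, forall h in A, pmul g h \in A]]) A.

Definition in_S_up_to_phase n r (gens : 'I_r -> pauli n) (g : pauli n) : bool :=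
  [exists k : 'Z_4, pscale k g \in gen_group gens].

Definition syndrome n r (gens : 'I_r -> pauli n) (g : pauli n) : {ffun 'I_r -> bool} :=
  [ffun i => ~~ pcommute g (gens i)].

Definition Pset n (m : {set 'I_n}) : {set pauli n} :=
  [set g | (pphase g == 0%R) && [forall j, (j \notin m) ==> (plet g j == PI)]].

Definition Sigma n r (gens : 'I_r -> pauli n) (m : {set 'I_n}) :=
  [set syndrome gens g | g in Pset m].

Definition good_synd n r (gens : 'I_r -> pauli n)
    (phi : {ffun 'I_r -> bool} -> pauli n) (m : {set 'I_n}) :=
  [set e in Sigma gens m |
     [forall g in Pset m, (syndrome gens g == e) ==> in_S_up_to_phase gens (pmul (phi e) g)]].

Definition fS n r (gens : 'I_r -> pauli n) (phi : {ffun 'I_r -> bool} -> pauli n)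
    (t : nat) : rat :=
  (('C(n, t))%:R^-1 *
   \sum_(m : {set 'I_n} | #|m| == t)
      (#|good_synd gens phi m|%:R / #|Sigma gens m|%:R))%R.

Definition pauli_of_seq n (s : seq letter) : pauli n :=
  (0%R, [ffun j : 'I_n => nth PI s j]).

Definition S7_gens (i : 'I_6) : pauli 7 :=
  pauli_of_seq 7 (nth [::] [::
    [:: PI; PI; PI; PX; PX; PX; PX];
    [:: PI; PX; PX; PI; PI; PX; PX];
    [:: PX; PI; PX; PI; PX; PI; PX];
    [:: PI; PI; PI; PZ; PZ; PZ; PZ];
    [:: PI; PZ; PZ; PI; PI; PZ; PZ];
    [:: PZ; PI; PZ; PI; PZ; PI; PZ]]
    i).

Definition single n (L : letter) (a : nat) : pauli n :=
  (0%R, [ffun j : 'I_n => if (a != 0%N) && (val j == a.-1) then L else PI]).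

Definition phi7 (e : {ffun 'I_6 -> bool}) : pauli 7 :=
  let a := (4 * e (inord 0) + 2 * e (inord 1) + e (inord 2))%N in
  let b := (4 * e (inord 3) + 2 * e (inord 4) + e (inord 5))%N in
  pmul (single 7 PZ a) (single 7 PX b).

(* The stabilizer group S7 is, up to phase, the set of Pauli operators whose
   X-part and Z-part both lie in the [7,3] simplex code spanned by the rows of
   g1, g2, g3 (and of g4, g5, g6), and the syndrome of a Pauli operator is its
   vector of symplectic products with the generators.  Both are computable on
   words of letters, so for each of the 128 supports {m} the syndrome set
   Sigma_{m} and its good syndromes are obtained by enumerating the 4^|{m}|
   operators of P^{m}; summing the ratios gives f_{S7}(t). *)

From mathcomp Require Import all_boot all_order all_algebra.
Import GRing.Theory.
Set Implicit Arguments. Unset Strict Implicit. Unset Printing Implicit Defensive.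

Definition xbit (a : letter) : bool := match a with PX | PY => true | _ => false end.
Definition zbit (a : letter) : bool := match a with PZ | PY => true | _ => false end.

Definition letter_anti (a b : letter) : bool := (xbit a && zbit b) (+) (zbit a && xbit b).

Lemma mul1C_letter a b : (mul1 a b).1 = (mul1 b a).1.
Proof. by case: a; case: b. Qed.

Lemma mul1C_phase a b :
  (mul1 a b).2 = ((mul1 b a).2 + (2 * letter_anti a b)%:R)%R.
Proof. by case: a; case: b; apply/val_inj. Qed.

Lemma xbit_mul1 a b : xbit (mul1 a b).1 = xbit a (+) xbit b.
Proof. by case: a; case: b. Qed.

Lemma zbit_mul1 a b : zbit (mul1 a b).1 = zbit a (+) zbit b.
Proof. by case: a; case: b. Qed.

Lemma letter_bits_inj a b : xbit a = xbit b -> zbit a = zbit b -> a = b.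
Proof. by case: a; case: b. Qed.

Lemma plet_pmul n (g h : pauli n) j : plet (pmul g h) j = (mul1 (plet g j) (plet h j)).1.
Proof. exact: ffunE. Qed.

Lemma pcommuteE n (g h : pauli n) :
  pcommute g h = ~~ odd (\sum_(j < n) letter_anti (plet g j) (plet h j)).
Proof.
rewrite /pcommute /pmul xpair_eqE.
have -> : [ffun j => (mul1 (plet g j) (plet h j)).1] ==
          [ffun j => (mul1 (plet h j) (plet g j)).1].
  by apply/eqP/ffunP => j; rewrite !ffunE mul1C_letter.
have -> : (\sum_(j < n) (mul1 (plet g j) (plet h j)).2 =
          \sum_(j < n) (mul1 (plet h j) (plet g j)).2 +
          (2 * \sum_(j < n) letter_anti (plet g j) (plet h j))%N%:R)%R.
  rewrite big_distrr /= natr_sum -big_split /=.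
  by apply: eq_bigr => j _; rewrite mul1C_phase.
rewrite andbT (addrC (pphase h)) addrA -subr_eq0 [X in (X - _)%R]addrC addrK.
by rewrite -val_eqE /= val_Zp_nat // -(muln_modr 2 _ 2) modn2; case: odd.
Qed.

Section GeneratedGroup.
Variables (n r : nat) (gens : 'I_r -> pauli n).

Lemma gen_group_min (A : {set pauli n}) :
  pid n \in A -> (forall i, gens i \in A) ->
  (forall g h, g \in A -> h \in A -> pmul g h \in A) ->
  gen_group gens \subset A.
Proof.
move=> A1 Agens AM; apply/subsetP => x /bigcapP; apply; apply/and3P; split => //.
  exact/forallP.
by apply/forall_inP => g Ag; apply/forall_inP => h; exact: AM.
Qed.

Lemma gen_group1 : pid n \in gen_group gens.
Proof. by apply/bigcapP => A /and3P[]. Qed.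

Lemma gen_group_gen i : gens i \in gen_group gens.
Proof. by apply/bigcapP => A /and3P[_ /forallP]. Qed.

Lemma gen_groupM g h : g \in gen_group gens -> h \in gen_group gens ->
  pmul g h \in gen_group gens.
Proof.
move=> /bigcapP Sg /bigcapP Sh; apply/bigcapP => A A_closed.
by case/and3P: (A_closed) => _ _ /forall_inP/(_ g (Sg A A_closed))/forall_inP; apply; apply: Sh.
Qed.

Lemma gen_group_foldr (s : seq (pauli n)) :
  all (mem (gen_group gens)) s -> foldr (@pmul n) (pid n) s \in gen_group gens.
Proof.
elim: s => [_|g s IHs /andP[Sg Ss]] /=; first exact: gen_group1.
by apply: gen_groupM => //; apply: IHs.
Qed.

End GeneratedGroup.

Definition steane_rows : seq (seq letter) := [::
    [:: PI; PI; PI; PX; PX; PX; PX];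
    [:: PI; PX; PX; PI; PI; PX; PX];
    [:: PX; PI; PX; PI; PX; PI; PX];
    [:: PI; PI; PI; PZ; PZ; PZ; PZ];
    [:: PI; PZ; PZ; PI; PI; PZ; PZ];
    [:: PZ; PI; PZ; PI; PZ; PI; PZ]].

Lemma S7_gensE i : S7_gens i = pauli_of_seq 7 (nth [::] steane_rows i).
Proof. by []. Qed.

Definition word7 (g : pauli 7) (k : nat) : letter := plet g (inord k).

(* The [7,3] simplex code spanned by the rows of g1, g2, g3 (positions are
   0-based); its coordinates 3, 1 and 0 are free. *)
Definition simplex7 (w : nat -> bool) : bool :=
  [&& w 2 == w 0 (+) w 1, w 4 == w 0 (+) w 3, w 5 == w 1 (+) w 3
    & w 6 == w 0 (+) w 1 (+) w 3].

Definition simplex_comb (c3 c1 c0 : bool) (k : nat) : bool :=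
  nth false [:: c0; c1; c0 (+) c1; c3; c0 (+) c3; c1 (+) c3; c0 (+) c1 (+) c3] k.

Definition steane_word (f : nat -> letter) : bool :=
  simplex7 (fun k => xbit (f k)) && simplex7 (fun k => zbit (f k)).

Lemma eq_in_simplex7 v w : {in gtn 7, v =1 w} -> simplex7 v = simplex7 w.
Proof. by move=> vw; rewrite /simplex7 !vw. Qed.

Lemma eq_in_steane_word f g : {in gtn 7, f =1 g} -> steane_word f = steane_word g.
Proof. by move=> fg; congr andb; apply: eq_in_simplex7 => k /fg ->. Qed.

Lemma simplex7_addb v w :
  simplex7 v -> simplex7 w -> simplex7 (fun k => v k (+) w k).
Proof.
rewrite /simplex7 => /and4P[/eqP-> /eqP-> /eqP-> /eqP->] /and4P[/eqP-> /eqP-> /eqP-> /eqP->].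
by case: (v 0); case: (v 1); case: (v 3); case: (w 0); case: (w 1); case: (w 3).
Qed.

Lemma simplex7_span w k : simplex7 w -> k < 7 -> w k = simplex_comb (w 3) (w 1) (w 0) k.
Proof.
case/and4P=> /eqP e2 /eqP e4 /eqP e5 /eqP e6.
by case: k => [|[|[|[|[|[|[|//]]]]]]]; rewrite /simplex_comb /= ?e2 ?e4 ?e5 ?e6.
Qed.

Lemma steane_wordM g h :
  steane_word (word7 g) -> steane_word (word7 h) -> steane_word (word7 (pmul g h)).
Proof.
case/andP=> gx gz /andP[hx hz]; apply/andP; split.
  rewrite (@eq_in_simplex7 _ (fun k => xbit (word7 g k) (+) xbit (word7 h k))).
    exact: simplex7_addb.
  by move=> k _; rewrite /word7 plet_pmul xbit_mul1.
rewrite (@eq_in_simplex7 _ (fun k => zbit (word7 g k) (+) zbit (word7 h k))).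
  exact: simplex7_addb.
by move=> k _; rewrite /word7 plet_pmul zbit_mul1.
Qed.

Lemma in_S7_steane g : in_S_up_to_phase S7_gens g -> steane_word (word7 g).
Proof.
case/existsP=> k gS; set A := [set x | steane_word (word7 x)].
suff /subsetP/(_ _ gS) : gen_group S7_gens \subset A by rewrite inE.
apply: gen_group_min => [|i|x y]; rewrite ?inE.
- by rewrite /word7 /steane_word /simplex7 /= !ffunE.
- by case: i => [[|[|[|[|[|[|//]]]]]] ?]; rewrite /word7 /steane_word /simplex7 /= !ffunE !inordK.
- exact: steane_wordM.
Qed.

Definition stab_word (c : seq bool) : pauli 7 :=
  foldr (@pmul 7) (pid 7) [seq if nth false c i then S7_gens (inord i) else pid 7 | i <- iota 0 6].

Lemma stab_word_in_S7 c : stab_word c \in gen_group S7_gens.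
Proof.
apply: gen_group_foldr; apply/allP => g /mapP[i _ ->].
by case: ifP => _; [apply: gen_group_gen | apply: gen_group1].
Qed.

Section LetterBit.
Variable bit : letter -> bool.
Hypothesis bit_mul1 : {morph bit : a b / (mul1 a b).1 >-> a (+) b}.
Hypothesis bitI : bit PI = false.

Lemma bit_foldr_pmul n (s : seq (pauli n)) j :
  bit (plet (foldr (@pmul n) (pid n) s) j) = foldr addb false [seq bit (plet g j) | g <- s].
Proof. by elim: s => [|g s /= <-]; rewrite ?plet_pmul ?bit_mul1 // ffunE. Qed.

Lemma bit_stab_word c k : k < 7 ->
  bit (word7 (stab_word c) k) =
  foldr addb false [seq nth false c i && bit (nth PI (nth [::] steane_rows i) k) | i <- iota 0 6].
Proof.
move=> lt_k7; rewrite /word7 bit_foldr_pmul -map_comp; congr foldr; apply/eq_in_map => i.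
rewrite mem_iota /= => lt_i6; case: ifP => _ /=; last by rewrite ffunE.
by rewrite ffunE !inordK.
Qed.

End LetterBit.

Lemma word7_stab_word c3 c1 c0 d3 d1 d0 k : k < 7 ->
  let w := word7 (stab_word [:: c3; c1; c0; d3; d1; d0]) k in
  xbit w = simplex_comb c3 c1 c0 k /\ zbit w = simplex_comb d3 d1 d0 k.
Proof.
move=> lt_k7; rewrite /= (bit_stab_word xbit_mul1) // (bit_stab_word zbit_mul1) //.
by case: k lt_k7 => [|[|[|[|[|[|[|//]]]]]]] _;
  case: c3; case: c1; case: c0; case: d3; case: d1; case: d0.
Qed.

Lemma steane_in_S7 g : steane_word (word7 g) -> in_S_up_to_phase S7_gens g.
Proof.
case/andP=> gx gz; set w := word7 g.
set P := stab_word [:: xbit (w 3); xbit (w 1); xbit (w 0); zbit (w 3); zbit (w 1); zbit (w 0)].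
have letP : plet P = plet g.
  apply/ffunP => j; have [Px Pz] := word7_stab_word
    (xbit (w 3)) (xbit (w 1)) (xbit (w 0)) (zbit (w 3)) (zbit (w 1)) (zbit (w 0)) (ltn_ord j).
  rewrite -[j]inord_val -/(word7 P j); apply: letter_bits_inj.
    by rewrite Px (simplex7_span gx (ltn_ord j)).
  by rewrite Pz (simplex7_span gz (ltn_ord j)).
apply/existsP; exists (pphase P - pphase g)%R.
suff -> : pscale (pphase P - pphase g)%R g = P by exact: stab_word_in_S7.
by rewrite /pscale subrK -letP; case: (P).
Qed.

Lemma in_S7E g : in_S_up_to_phase S7_gens g = steane_word (word7 g).
Proof. by apply/idP/idP; [apply: in_S7_steane | apply: steane_in_S7]. Qed.

Fixpoint words (T : Type) (A : seq T) (n : nat) : seq (seq T) :=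
  if n is n'.+1 then [seq a :: l | a <- A, l <- words A n'] else [:: [::]].

Lemma mem_words (T : eqType) (A : seq T) n l :
  (l \in words A n) = (size l == n) && all (mem A) l.
Proof.
elim: n l => [|n IHn] [|a l] //=; first by apply/allpairsP => -[? []].
rewrite eqSS andbCA -IHn; apply/allpairsP/andP => [[[b m] /= [Ab Wm [-> ->]]] // | [Aa Wl]].
by exists (a, l).
Qed.

Lemma size_words (T : eqType) (A : seq T) n l : l \in words A n -> size l = n.
Proof. by rewrite mem_words => /andP[/eqP]. Qed.

Lemma words_uniq (T : eqType) (A : seq T) n : uniq A -> uniq (words A n).
Proof.
move=> uA; elim: n => //= n IHn; apply: allpairs_uniq => // -[a l] [b m] _ _ /=.
by case=> -> ->.
Qed.

Lemma all2_nthP (S T : Type) (r : S -> T -> bool) x0 y0 s t : size s = size t ->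
  reflect (forall i, i < size s -> r (nth x0 s i) (nth y0 t i)) (all2 r s t).
Proof.
move=> st; rewrite all2E st eqxx /=.
apply: (iffP (all_nthP (x0, y0))); rewrite size_zip st minnn => rst i lt_i.
  by have := rst i lt_i; rewrite nth_zip.
by rewrite /= nth_zip //; apply: rst.
Qed.

Definition ffun_seq (T : Type) n (e : {ffun 'I_n.+1 -> T}) : seq T :=
  mkseq (fun k => e (inord k)) n.+1.

Lemma ffun_seq_inj (T : Type) n : injective (@ffun_seq T n).
Proof.
move=> e1 e2 /(congr1 (fun s => nth (e1 ord0) s _)) e12; apply/ffunP => i.
by have := e12 i; rewrite !nth_mkseq // inord_val.
Qed.

Lemma forall_in_seq (T : finType) (A : {set T}) (s : seq T) (P : pred T) :
  s =i A -> [forall x in A, P x] = all P s.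
Proof. by move=> sA; apply/forall_inP/allP => PA x Ax; apply: PA; rewrite ?sA // -sA. Qed.

Lemma card_imset_filter (T U : finType) (V : eqType) (f : T -> U) (code : U -> V)
    (Q : pred U) (Qv : pred V) (A : {set T}) (s : seq T) (univ : seq V) :
  injective code -> s =i A -> uniq univ -> (forall x, code (f x) \in univ) ->
  (forall u, Qv (code u) = Q u) ->
  #|[set u in f @: A | Q u]| = count (fun v => (v \in [seq code (f x) | x <- s]) && Qv v) univ.
Proof.
move=> code_inj sA uniq_univ univ_code QvE.
set L := [seq u <- undup (map f s) | Q u].
have uL : uniq L by rewrite filter_uniq ?undup_uniq.
have memL : [set u in f @: A | Q u] =i L.
  move=> u; rewrite !inE mem_filter mem_undup andbC; congr andb.
  by apply/imsetP/mapP => -[x Ax ->]; exists x; rewrite ?sA // -sA.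
rewrite (eq_card memL) (card_uniqP uL) -(size_map code) -size_filter.
apply/perm_size/uniq_perm; rewrite ?filter_uniq ?map_inj_uniq //.
move=> v; rewrite mem_filter; apply/mapP/andP => [[u] | [/andP[/mapP[x sx ->] Qvx] _]].
  rewrite mem_filter mem_undup => /andP[Qu /mapP[x sx fx]] ->.
  rewrite QvE Qu andbT fx univ_code; split => //.
  exact: (map_f (fun y => code (f y))).
by exists (f x); rewrite // mem_filter mem_undup map_f // -QvE Qvx.
Qed.

Definition letters : seq letter := [:: PI; PX; PY; PZ].

(* Equality on [letter], inherited through [can_type], does not reduce under
   vm_compute. *)
Definition is_id (a : letter) : bool := if a is PI then true else false.

Lemma is_idE a : is_id a = (a == PI).
Proof. by apply/idP/eqP => [|->]; case: a. Qed.

Fixpoint support_words (b : seq bool) : seq (seq letter) :=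
  if b is c :: b' then
    [seq a :: l | a <- (if c then letters else [:: PI]), l <- support_words b']
  else [:: [::]].

Lemma mem_support_words b l : (l \in support_words b) = all2 (fun c a => c || is_id a) b l.
Proof.
elim: b l => [|c b IHb] [|a l] //=; try by apply/allpairsP => -[? []].
rewrite -IHb; apply/allpairsP/andP => [[[a' l'] /= [a'c l'b [-> ->]]] | [ca lb]].
  by split => //; case: c a'c => //; rewrite inE -is_idE.
by exists (a, l); split => //=; case: c ca; case: a => //= _; rewrite !inE eqxx ?orbT.
Qed.

Definition support_set (b : seq bool) : {set 'I_7} := [set j : 'I_7 | nth false b j].

Lemma support_wordsP b : size b = 7 ->
  map (pauli_of_seq 7) (support_words b) =i Pset (support_set b).
Proof.
move=> b7 g; rewrite inE; apply/mapP/andP => [[l] | [/eqP g0 /forallP gI]].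
  rewrite mem_support_words => bl ->; split => //; apply/forallP => j.
  have bl_size : size b = size l by move: bl; rewrite all2E => /andP[/eqP].
  move/(all2_nthP _ false PI bl_size): bl => bl; apply/implyP; rewrite inE ffunE => bj.
  by have := bl j; rewrite b7 ltn_ord (negbTE bj) is_idE => /(_ isT).
exists (mkseq (word7 g) 7).
  rewrite mem_support_words; apply/(all2_nthP _ false PI); rewrite ?size_mkseq // b7 => i lt_i7.
  have := gI (inord i); rewrite inE inordK // nth_mkseq // is_idE.
  by case: (nth false b i).
case: g g0 gI => k f /= -> _; congr pair; apply/ffunP => j.
by rewrite ffunE nth_mkseq // /word7 inord_val.
Qed.

Definition seq_anti n (l r : seq letter) : bool :=
  odd (count (fun j => letter_anti (nth PI l j) (nth PI r j)) (iota 0 n)).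

Lemma pcommute_seq n (l r : seq letter) :
  pcommute (pauli_of_seq n l) (pauli_of_seq n r) = ~~ seq_anti n l r.
Proof.
rewrite pcommuteE /seq_anti; under eq_bigr do rewrite !ffunE.
by rewrite -(big_mkord xpredT (fun j => nat_of_bool (letter_anti (nth PI l j) (nth PI r j))))
  /index_iota subn0 -sumn_count sumnE big_map.
Qed.

Definition synd7 (l : seq letter) : seq bool := [seq seq_anti 7 l r | r <- steane_rows].

Lemma synd7E l : ffun_seq (syndrome S7_gens (pauli_of_seq 7 l)) = synd7 l.
Proof.
by rewrite /ffun_seq /mkseq /synd7 /syndrome /= !ffunE !S7_gensE !inordK // !pcommute_seq !negbK.
Qed.

(* [(mul1 a b).1] without the 'Z_4 phase, whose evaluation would dominate
   the vm_compute below. *)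
Definition letter_mul (a b : letter) : letter :=
  match a, b with
  | PI, c | c, PI => c
  | PX, PX | PY, PY | PZ, PZ => PI
  | PX, PY | PY, PX => PZ
  | PY, PZ | PZ, PY => PX
  | PZ, PX | PX, PZ => PY
  end.

Lemma letter_mulE a b : letter_mul a b = (mul1 a b).1.
Proof. by case: a; case: b. Qed.

Definition phi_letter (s : seq bool) (k : nat) : letter :=
  let a := 4 * nth false s 0 + 2 * nth false s 1 + nth false s 2 in
  let b := 4 * nth false s 3 + 2 * nth false s 4 + nth false s 5 in
  letter_mul (if (a != 0) && (k == a.-1) then PZ else PI)
             (if (b != 0) && (k == b.-1) then PX else PI).

Definition corrects (s : seq bool) (l : seq letter) : bool :=
  steane_word (nth PI [seq letter_mul (phi_letter s k) (nth PI l k) | k <- iota 0 7]).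

Lemma corrects_phi7 e l :
  in_S_up_to_phase S7_gens (pmul (phi7 e) (pauli_of_seq 7 l)) = corrects (ffun_seq e) l.
Proof.
rewrite in_S7E; apply: eq_in_steane_word => k; rewrite inE => lt_k7.
have val_k : val (inord k : 'I_7) = k by exact: inordK.
by rewrite (nth_map 0) ?size_iota // nth_iota // add0n /word7 !plet_pmul !ffunE val_k
  inordK // /phi_letter /ffun_seq /mkseq /= !letter_mulE.
Qed.

Definition syndrome_table (b : seq bool) : seq (seq bool * bool) :=
  [seq (synd7 l, corrects (synd7 l) l) | l <- support_words b].

Definition syndrome_count (tab : seq (seq bool * bool)) : nat :=
  count (mem (unzip1 tab)) (words [:: false; true] 6).

Definition decodable_count (tab : seq (seq bool * bool)) : nat :=
  count (fun s => (s \in unzip1 tab) && all (fun p => (p.1 == s) ==> p.2) tab)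
    (words [:: false; true] 6).

Lemma unzip1_syndrome_table b :
  unzip1 (syndrome_table b) =
  [seq ffun_seq (syndrome S7_gens x) | x <- map (pauli_of_seq 7) (support_words b)].
Proof. by rewrite /unzip1 /syndrome_table -!map_comp; apply: eq_map => l /=; rewrite synd7E. Qed.

Lemma syndrome_words g : ffun_seq (syndrome S7_gens g) \in words [:: false; true] 6.
Proof. by rewrite mem_words size_mkseq; apply/allP => -[]. Qed.

Lemma card_Sigma b : size b = 7 ->
  #|Sigma S7_gens (support_set b)| = syndrome_count (syndrome_table b).
Proof.
move=> b7; rewrite /syndrome_count unzip1_syndrome_table.
transitivity #|[set u in Sigma S7_gens (support_set b) | predT u]|.
  by apply: eq_card => u; rewrite inE andbT.
rewrite (card_imset_filter (Qv := predT) (univ := words [:: false; true] 6)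
  (@ffun_seq_inj bool 5) (support_wordsP b7)) ?words_uniq //; last exact: syndrome_words.
by apply: eq_count => v; rewrite andbT.
Qed.

Lemma card_good_synd b : size b = 7 ->
  #|good_synd S7_gens phi7 (support_set b)| = decodable_count (syndrome_table b).
Proof.
move=> b7; rewrite /decodable_count unzip1_syndrome_table.
rewrite (card_imset_filter (univ := words [:: false; true] 6)
  (Qv := fun v => all (fun p => (p.1 == v) ==> p.2) (syndrome_table b))
  (@ffun_seq_inj bool 5) (support_wordsP b7)) ?words_uniq //; first exact: syndrome_words.
move=> e; rewrite (forall_in_seq _ (support_wordsP b7)) !all_map; apply: eq_all => l /=.
rewrite -(inj_eq (@ffun_seq_inj bool 5)) synd7E corrects_phi7.
by case: eqP => // ->.
Qed.

Lemma card_support_set b : size b = 7 -> #|support_set b| = count id b.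
Proof.
move=> b7; rewrite -sum1_card (eq_bigl (fun j : 'I_7 => nth false b j)) => [|j]; last by rewrite inE.
rewrite -(big_mkord (nth false b) (fun _ => 1)) /index_iota subn0 sum1_count.
by rewrite -{2}(mkseq_nth false b) b7 /mkseq count_map.
Qed.

Lemma support_set_inj : {in words [:: false; true] 7 &, injective support_set}.
Proof.
move=> b1 b2; rewrite !mem_words => /andP[/eqP b1_7 _] /andP[/eqP b2_7 _] b12.
apply: (@eq_from_nth _ false) => [|k]; rewrite b1_7 ?b2_7 // => lt_k7.
by move/setP/(_ (inord k)): b12; rewrite !inE inordK.
Qed.

Lemma perm_support_sets :
  perm_eq (index_enum {set 'I_7}) (map support_set (words [:: false; true] 7)).
Proof.
apply: uniq_perm; rewrite ?index_enum_uniq ?map_inj_in_uniq ?words_uniq //;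
  first exact: support_set_inj.
move=> A; rewrite mem_index_enum; symmetry; apply/mapP.
exists (mkseq (fun k => (inord k : 'I_7) \in A) 7).
  by rewrite mem_words size_mkseq; apply/allP => -[].
by apply/setP => j; rewrite inE nth_mkseq // inord_val.
Qed.

Definition success_ratio (b : seq bool) : rat :=
  let tab := syndrome_table b in ((decodable_count tab)%:R / (syndrome_count tab)%:R)%R.

Definition ratio_table : seq (nat * rat) :=
  [seq (count id b, success_ratio b) | b <- words [:: false; true] 7].

Definition fS7 (t : nat) : rat := ('C(7, t)%:R^-1 * \sum_(p <- ratio_table | p.1 == t) p.2)%R.

Lemma fS_S7E t : fS S7_gens phi7 t = fS7 t.
Proof.
rewrite /fS7 /ratio_table big_map /fS (perm_big _ perm_support_sets) big_map.
congr (_ * _)%R; rewrite big_seq_cond [RHS]big_seq_cond.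
apply: eq_big => [b | b /andP[bW _]]; last first.
  by rewrite card_Sigma ?card_good_synd // (size_words bW).
by case bW: (b \in _); rewrite //= card_support_set // (size_words bW).
Qed.

(* ratio_table is a closed constant, so vm_compute evaluates it only once. *)
Lemma fS7_values :
  [seq fS7 t | t <- iota 0 8] = [:: 1; 1; 9%:R / 16%:R; 5%:R / 16%:R; 5%:R / 64%:R; 0; 0; 0]%R.
Proof. by apply/eqP; rewrite /fS7 unlock; vm_compute. Qed.

Theorem mainTheorem3 :
  fS S7_gens phi7 0 = 1%R /\ fS S7_gens phi7 1 = 1%R /\
  fS S7_gens phi7 2 = (9%:R / 16%:R)%R /\ fS S7_gens phi7 3 = (5%:R / 16%:R)%R /\
  fS S7_gens phi7 4 = (5%:R / 64%:R)%R /\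
  fS S7_gens phi7 5 = 0%R /\ fS S7_gens phi7 6 = 0%R /\ fS S7_gens phi7 7 = 0%R.
Proof. by rewrite !fS_S7E; move: fS7_values => /= [-> -> -> -> -> -> -> ->]. Qed.
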